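(* Let $V$ and $W$ be normal PO-dilators and $\eta:V\Rightarrow W$ a natural isomorphism (of functors on the category of partial orders and quasi embeddings). If $(\mathcal T W,\iota,\kappa)$ is a Kruskal derivative of $W$, then $(\mathcal T W,\iota,\kappa\circ\eta)$ is a Kruskal derivative of $V$, where $(\kappa\circ\eta)_X=\kappa_X\circ\eta_{\mathcal T W(X)}:V(\mathcal T W(X))\to\mathcal T W(X)$.
   Context: A quasi embedding between partial orders $X,Y$ is a function $f$ with $f(x)\leq_Y f(y)\Rightarrow x\leq_X y$; an embedding also satisfies the converse. $\mathrm{PO}$ is the category of partial orders and quasi embeddings. $[X]^{<\omega}$ denotes the finite subsets of $X$, with $[f]^{<\omega}(a)=\{f(x)\mid x\in a\}$. A PO-dilator is a functor $W:\mathrm{PO}\to\mathrm{PO}$ mapping embeddings to embeddings, with a natural transformation $\operatorname{supp}^W:W\Rightarrow[\cdot]^{<\omega}$ such that for every embedding $f:X\to Y$, $\operatorname{rng}(W(f))=\{\sigma\in W(Y)\mid\operatorname{supp}^W_Y(\sigma)\subseteq\operatorname{rng}(f)\}$. For finite $a,b\subseteq X$, $a\leq^{\mathrm{fin}}_X b$ iff every $x\in a$ has some $y\in b$ with $x\leq_X y$ ($z\leq^{\mathrm{fin}}_X b$ means $\{z\}\leq^{\mathrm{fin}}_X b$). $W$ is normal if $\sigma\leq_{W(X)}\tau$ implies $\operatorname{supp}^W_X(\sigma)\leq^{\mathrm{fin}}_X\operatorname{supp}^W_X(\tau)$. A Kruskal fixed point of $W$ over a partial order $X$ is a partial order $Z$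 with functions $\iota:X\to Z$, $\kappa:W(Z)\to Z$ such that $\operatorname{rng}(\iota)\cap\operatorname{rng}(\kappa)=\emptyset$ and, for all $x,y\in X$, $\sigma,\tau\in W(Z)$: $\iota(x)\leq_Z\iota(y)\Rightarrow x\leq_X y$; $\iota(x)\leq_Z\kappa(\tau)$ iff $\iota(x)\leq^{\mathrm{fin}}_Z\operatorname{supp}^W_Z(\tau)$; $\kappa(\sigma)\not\leq_Z\iota(y)$; $\kappa(\sigma)\leq_Z\kappa(\tau)$ iff ($\sigma\leq_{W(Z)}\tau$ or $\kappa(\sigma)\leq^{\mathrm{fin}}_Z\operatorname{supp}^W_Z(\tau)$). It is initial if for every Kruskal fixed point $(Z',\iota',\kappa')$ of $W$ over $X$ there is a unique quasi embedding $f:Z\to Z'$ with $f\circ\iota=\iota'$ and $f\circ\kappa=\kappa'\circ W(f)$. A Kruskal derivative of a normal PO-dilator $W$ is a tuple $(\mathcal T W,\iota,\kappa)$ consisting of a normal PO-dilator $\mathcal T W$ and families of functions $\iota_X:X\to\mathcal T W(X)$, $\kappa_X:W(\mathcal T W(X))\to\mathcal T W(X)$ indexed by partial orders $X$ such that (i) $(\mathcal T W(X),\iota_X,\kappa_X)$ is an initial Kruskal fixed point of $W$ over $X$ for each $X$, and (ii) $\iota_Y\circ f=\mathcal T W(f)\circ\iota_X$ and $\mathcal T W(f)\circ\kappa_X=\kappa_Y\circ W(\mathcal T W(f))$ for every quasi embedding $f:X\to Y$. *)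

From Stdlib Require Import List.
Import ListNotations.

Set Implicit Arguments.

Record PO := MkPO {
  car :> Type;
  le : car -> car -> Prop;
  le_refl : forall x, le x x;
  le_antisym : forall x y, le x y -> le y x -> x = y;
  le_trans : forall x y z, le x y -> le y z -> le x z
}.
Arguments le {p} _ _.

Definition is_qe (X Y : PO) (f : X -> Y) : Prop :=
  forall x y : X, le (f x) (f y) -> le x y.

Definition is_emb (X Y : PO) (f : X -> Y) : Prop :=
  forall x y : X, le (f x) (f y) <-> le x y.
Arguments is_qe {X Y} f.
Arguments is_emb {X Y} f.

Record QE (X Y : PO) := MkQE {
  qe_fun :> X -> Y;
  qe_prop : is_qe qe_fun
}.

Definition id_qe (X : PO) : QE X X.
Proof. refine (@MkQE X X (fun x => x) _). intros x y h; exact h. Defined.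

Definition comp_qe (X Y Z : PO) (g : QE Y Z) (f : QE X Y) : QE X Z.
Proof.
  refine (@MkQE X Z (fun x => g (f x)) _).
  intros x y h. apply (qe_prop f). apply (qe_prop g). exact h.
Defined.

(** Finite subsets of X are represented by lists; the subset is the set of
    members of the list.  [a <=fin b]: *)
Definition fin_le {X : PO} (a b : list X) : Prop :=
  forall x, In x a -> exists y, In y b /\ le x y.

Record POFunctor := MkPOFunctor {
  F_obj :> PO -> PO;
  F_map : forall X Y : PO, QE X Y -> QE (F_obj X) (F_obj Y);
  (* morphisms are functions: the action only depends on the function *)
  F_ext : forall (X Y : PO) (f g : QE X Y),
      (forall x, f x = g x) -> forall s, F_map f s = F_map g s;
  F_id : forall (X : PO) s, F_map (id_qe X) s = s;
  F_comp : forall (X Y Z : PO) (f : QE X Y) (g : QE Y Z) s,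
      F_map (comp_qe g f) s = F_map g (F_map f s)
}.
Arguments F_map _ {X Y} _.

Record PODilator := MkPODilator {
  D_fun :> POFunctor;
  supp : forall X : PO, D_fun X -> list X;
  D_emb : forall (X Y : PO) (f : QE X Y),
      is_emb f -> is_emb (F_map D_fun f);
  (* supp is a natural transformation W => [.]^{<omega} *)
  D_supp_nat : forall (X Y : PO) (f : QE X Y) (s : D_fun X) (y : Y),
      In y (supp Y (F_map D_fun f s)) <-> exists x, In x (supp X s) /\ f x = y;
  D_supp_rng : forall (X Y : PO) (f : QE X Y), is_emb f ->
      forall t : D_fun Y,
        (exists s, F_map D_fun f s = t) <->
        (forall y, In y (supp Y t) -> exists x, f x = y)
}.

Definition normal (W : PODilator) : Prop :=
  forall (X : PO) (s t : W X), le s t -> fin_le (supp W X s) (supp W X t).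

Definition kruskal_fp (W : PODilator) (X Z : PO)
    (iota : X -> Z) (kappa : W Z -> Z) : Prop :=
  (forall x s, iota x <> kappa s) /\
  (forall x y, le (iota x) (iota y) -> le x y) /\
  (forall x t, le (iota x) (kappa t) <-> fin_le [iota x] (supp W Z t)) /\
  (forall s y, ~ le (kappa s) (iota y)) /\
  (forall s t, le (kappa s) (kappa t) <->
               (le s t \/ fin_le [kappa s] (supp W Z t))).

Definition initial_kruskal_fp (W : PODilator) (X Z : PO)
    (iota : X -> Z) (kappa : W Z -> Z) : Prop :=
  kruskal_fp W X Z iota kappa /\
  forall (Z' : PO) (iota' : X -> Z') (kappa' : W Z' -> Z'),
    kruskal_fp W X Z' iota' kappa' ->
    exists f : QE Z Z',
      ((forall x, f (iota x) = iota' x) /\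
       (forall s, f (kappa s) = kappa' (F_map W f s))) /\
      (forall g : QE Z Z',
         (forall x, g (iota x) = iota' x) ->
         (forall s, g (kappa s) = kappa' (F_map W g s)) ->
         forall z, g z = f z).

Definition kruskal_derivative (W : PODilator) (TW : PODilator)
    (iota : forall X : PO, X -> TW X)
    (kappa : forall X : PO, W (TW X) -> TW X) : Prop :=
  normal TW /\
  (forall X : PO, initial_kruskal_fp W X (TW X) (iota X) (kappa X)) /\
  (forall (X Y : PO) (f : QE X Y),
     (forall x, iota Y (f x) = F_map TW f (iota X x)) /\
     (forall s, F_map TW f (kappa X s) = kappa Y (F_map W (F_map TW f) s))).

Definition nat_iso (V W : POFunctor) (eta : forall X : PO, V X -> W X) : Prop :=
  (forall (X Y : PO) (f : QE X Y) (s : V X),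
     eta Y (F_map V f s) = F_map W f (eta X s)) /\
  (forall X : PO,
     is_qe (eta X) /\
     exists g : W X -> V X, is_qe g /\
       (forall s, g (eta X s) = s) /\ (forall t, eta X (g t) = t)).

(* A natural isomorphism eta : V => W of PO-dilators preserves supports: the
   support of s is the least set P such that s lies in the range of V applied
   to the inclusion of P, and by naturality eta matches these ranges for V
   and W.  Being also an order isomorphism, eta turns every Kruskal fixed
   point (Z, iota, kappa) of W into the Kruskal fixed point
   (Z, iota, kappa o eta) of V, and its inverse turns fixed points of V back
   into fixed points of W.  A map out of TW X commutes with kappa o eta and
   V(f) exactly when it commutes with kappa and W(f), so initiality transfers. *)

From Stdlib Require Import List ProofIrrelevance.
Set Implicit Arguments.

Definition sub_po (X : PO) (P : X -> Prop) : PO.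
Proof.
  refine (@MkPO {x : X | P x} (fun a b => le (proj1_sig a) (proj1_sig b)) _ _ _).
  - intros a; apply le_refl.
  - intros [a pa] [b pb] hab hba; simpl in *.
    destruct (le_antisym _ _ _ hab hba); f_equal; apply proof_irrelevance.
  - intros a b c; apply le_trans.
Defined.

Definition sub_incl (X : PO) (P : X -> Prop) : QE (sub_po X P) X :=
  @MkQE (sub_po X P) X (@proj1_sig _ _) (fun a b h => h).

Lemma sub_incl_emb (X : PO) (P : X -> Prop) : is_emb (sub_incl X P).
Proof. intros a b; simpl; tauto. Qed.

Lemma supp_incl_rng (D : PODilator) (X : PO) (P : X -> Prop) (t : D X) :
  (forall y, In y (supp D X t) -> P y) <->
  exists t0, F_map D (sub_incl X P) t0 = t.
Proof.
  rewrite (D_supp_rng D (sub_incl X P) (@sub_incl_emb X P)).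
  split.
  - intros HP y Hy; exists (exist _ y (HP y Hy)); reflexivity.
  - intros Hrng y Hy; destruct (Hrng y Hy) as [[x Px] <-]; exact Px.
Qed.

Lemma fin_le_same_members (X : PO) (l a b : list X) :
  (forall y, In y a <-> In y b) -> fin_le l a <-> fin_le l b.
Proof.
  intros Hab; split; intros H x Hx; destruct (H x Hx) as [y [Hy Hxy]];
    exists y; split; trivial; apply Hab; exact Hy.
Qed.

Lemma is_emb_inverse (A B : PO) (e : A -> B) (g : B -> A) :
  is_qe g -> (forall s, g (e s) = s) -> is_qe e -> is_emb e.
Proof.
  intros Hg Hge He s t; split; [apply He|].
  intros Hst; apply Hg; rewrite !Hge; exact Hst.
Qed.

Lemma is_emb_inj (A B : PO) (e : A -> B) :
  is_emb e -> forall s t, e s = e t -> s = t.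
Proof.
  intros He s t Hst; apply le_antisym; apply He; rewrite Hst; apply le_refl.
Qed.

Lemma kruskal_fp_transport (V W : PODilator) (X Z : PO)
    (iota : X -> Z) (kappa : W Z -> Z) (e : V Z -> W Z) :
  is_emb e ->
  (forall s y, In y (supp W Z (e s)) <-> In y (supp V Z s)) ->
  kruskal_fp W X Z iota kappa ->
  kruskal_fp V X Z iota (fun s => kappa (e s)).
Proof.
  intros He Hsupp [K1 [K2 [K3 [K4 K5]]]].
  assert (Hfin : forall l s, fin_le l (supp W Z (e s)) <-> fin_le l (supp V Z s))
    by (intros l s; apply fin_le_same_members, Hsupp).
  split; [|split; [|split; [|split]]].
  - intros x s; apply K1.
  - exact K2.
  - intros x t; rewrite K3; apply Hfin.
  - intros s y; apply K4.
  - intros s t; rewrite K5, (He s t), Hfin; reflexivity.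
Qed.

Section NaturalIsomorphism.

Variables (V W : PODilator) (eta : forall X : PO, V X -> W X).
Hypothesis eta_iso : nat_iso V W eta.

Lemma nat_iso_natural (X Y : PO) (f : QE X Y) (s : V X) :
  eta Y (F_map V f s) = F_map W f (eta X s).
Proof. apply (proj1 eta_iso). Qed.

Lemma nat_iso_inverse (X : PO) :
  is_emb (eta X) /\
  exists g : W X -> V X, is_emb g /\
    (forall s, g (eta X s) = s) /\ (forall t, eta X (g t) = t).
Proof.
  destruct (proj2 eta_iso X) as [He [g [Hg [Hge Heg]]]].
  split; [exact (is_emb_inverse Hg Hge He)|].
  exists g; split; [exact (is_emb_inverse He Heg Hg)|split; assumption].
Qed.

Lemma supp_nat_iso (X : PO) (s : V X) (y : X) :
  In y (supp W X (eta X s)) <-> In y (supp V X s).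
Proof.
  split; intros Hy.
  - set (P := fun z => In z (supp V X s)).
    assert (Hs : exists s0, F_map V (sub_incl X P) s0 = s)
      by (apply supp_incl_rng; trivial).
    destruct Hs as [s0 Hs0].
    rewrite <- Hs0, nat_iso_natural in Hy.
    apply (supp_incl_rng W X P (F_map W (sub_incl X P) (eta _ s0))); trivial.
    exists (eta _ s0); reflexivity.
  - set (P := fun z => In z (supp W X (eta X s))).
    assert (Ht : exists t0, F_map W (sub_incl X P) t0 = eta X s)
      by (apply supp_incl_rng; trivial).
    destruct Ht as [t0 Ht0].
    destruct (nat_iso_inverse (sub_po X P)) as [_ [g [_ [_ Hg]]]].
    destruct (nat_iso_inverse X) as [He _].
    assert (Hs : s = F_map V (sub_incl X P) (g t0)).
    { apply (is_emb_inj He).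
      rewrite nat_iso_natural, Hg; symmetry; exact Ht0. }
    apply (supp_incl_rng V X P (F_map V (sub_incl X P) (g t0))).
    + exists (g t0); reflexivity.
    + rewrite <- Hs; exact Hy.
Qed.

Lemma supp_nat_iso_inv (X : PO) (g : W X -> V X) (t : W X) (y : X) :
  (forall t, eta X (g t) = t) ->
  In y (supp V X (g t)) <-> In y (supp W X t).
Proof. intros Hg; rewrite <- supp_nat_iso, Hg; reflexivity. Qed.

Lemma initial_kruskal_fp_nat_iso (X Z : PO) (iota : X -> Z) (kappa : W Z -> Z) :
  initial_kruskal_fp W X Z iota kappa ->
  initial_kruskal_fp V X Z iota (fun s => kappa (eta Z s)).
Proof.
  intros [Hfp Hinit].
  destruct (nat_iso_inverse Z) as [He [g [_ [Hge Heg]]]].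
  split; [exact (kruskal_fp_transport V He (supp_nat_iso Z) Hfp)|].
  intros Z' iota' kappa' Hfp'.
  destruct (nat_iso_inverse Z') as [_ [g' [Hg' [Hge' Heg']]]].
  assert (HfpW : kruskal_fp W X Z' iota' (fun t => kappa' (g' t)))
    by exact (kruskal_fp_transport W Hg' (fun t y => supp_nat_iso_inv g' t y Heg') Hfp').
  destruct (Hinit Z' iota' _ HfpW) as [f [[Hiota Hkappa] Huniq]].
  exists f; split; [split|].
  - exact Hiota.
  - intros s; rewrite Hkappa, <- nat_iso_natural, Hge'; reflexivity.
  - intros h Hiota_h Hkappa_h.
    apply Huniq; trivial.
    intros t; rewrite <- (Heg t), Hkappa_h, <- nat_iso_natural, Hge'; reflexivity.
Qed.

End NaturalIsomorphism.

Theorem proposition4p6 (V W : PODilator)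
    (eta : forall X : PO, V X -> W X)
    (TW : PODilator)
    (iota : forall X : PO, X -> TW X)
    (kappa : forall X : PO, W (TW X) -> TW X) :
  normal V -> normal W ->
  nat_iso V W eta ->
  kruskal_derivative W TW iota kappa ->
  kruskal_derivative V TW iota (fun X s => kappa X (eta (TW X) s)).
Proof.
  intros _ _ Heta [Hnormal [Hinit Hnat]].
  split; [exact Hnormal|split].
  - intros X; exact (initial_kruskal_fp_nat_iso V Heta (Hinit X)).
  - intros X Y f; destruct (Hnat X Y f) as [Hiota Hkappa]; split; [exact Hiota|].
    intros s; rewrite Hkappa, (nat_iso_natural V W Heta); reflexivity.
Qed.
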